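(* Let $G\in\mathcal{V}_{\sigma\ell\mathbb{G}_u}$. Then the interpretation of the constant $1$ in $G$ is a weak unit of the $\ell$-group $G$, i.e. $1\ge0$ and for all $f\in G$, $f\wedge1=0$ implies $f=0$.
   Context: $\mathcal{V}_{\sigma\ell\mathbb{G}_u}$ is the infinitary variety of algebras $(G,0,+,-,\vee,\wedge,\bigvee^-,1)$, with $\bigvee^-$ of countably infinite arity ($\bigvee_{n\ge1}^g f_n:=\bigvee^-(g,f_1,f_2,\dots)$) and $1$ a constant, satisfying the $\ell$-group axioms, (A1) $\bigvee_{n\ge1}^g f_n=\bigvee_{n\ge1}^g(f_n\wedge g)$; (A2) $\bigvee_{n\ge1}^g f_n=(f_1\wedge g)\vee\bigvee^-(g,f_2,f_3,\dots)$; (A3) $\bigvee_{n\ge1}^g(f_n\wedge h)\le h$ ($a\le b$ meaning $a\wedge b=a$); and $\bigvee_{n\ge1}^{|f|}(|f|\wedge n1)=|f|$ for all $f$. *)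

From Stdlib Require Import Arith.

Fixpoint nmul {G : Type} (zero : G) (add : G -> G -> G) (n : nat) (x : G) : G :=
  match n with
  | O => zero
  | S k => add (nmul zero add k x) x
  end.

(* The countable-arity operation bigvee^-(g,f_1,f_2,...) is modelled as
   bsup g f, with f : nat -> G and f 0 playing the role of f_1. *)
Record sigmaLGu : Type := {
  car :> Type;
  zero : car;
  add : car -> car -> car;
  opp : car -> car;
  join : car -> car -> car;
  meet : car -> car -> car;
  bsup : car -> (nat -> car) -> car;
  one : car;
  addA : forall x y z, add x (add y z) = add (add x y) z;
  addC : forall x y, add x y = add y x;
  add0 : forall x, add zero x = x;
  addN : forall x, add (opp x) x = zero;
  joinA : forall x y z, join x (join y z) = join (join x y) z;
  joinC : forall x y, join x y = join y x;
  meetA : forall x y z, meet x (meet y z) = meet (meet x y) z;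
  meetC : forall x y, meet x y = meet y x;
  absorb_jm : forall x y, join x (meet x y) = x;
  absorb_mj : forall x y, meet x (join x y) = x;
  add_join : forall x y z, add x (join y z) = join (add x y) (add x z);
  add_meet : forall x y z, add x (meet y z) = meet (add x y) (add x z);
  A1 : forall g f, bsup g f = bsup g (fun n => meet (f n) g);
  A2 : forall g f, bsup g f = join (meet (f 0) g) (bsup g (fun n => f (S n)));
  (* (A3): bigvee^g (f_n /\ h) <= h, with a <= b meaning a /\ b = a *)
  A3 : forall g f h, meet (bsup g (fun n => meet (f n) h)) h
                     = bsup g (fun n => meet (f n) h);
  A4 : forall f, let a := join f (opp f) in
       bsup a (fun n => meet a (nmul zero add (S n) one)) = a
}.

Definition le (G : sigmaLGu) (a b : G) : Prop := meet G a b = a.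

From Stdlib Require Import FunctionalExtensionality.

(* If [f >= 0] and [f ⊓ 1 = 0], then [f ⊓ n1 = 0] for every [n], because
   [x ⊓ (y + c) <= x ⊓ c] whenever [x ⊓ y <= 0] and [c >= 0].  The
   axiom [⋁^|f| (|f| ⊓ n1) = |f|] combined with (A3) for [h = 0] then forces
   [f <= 0].  Positivity of [1] follows by the same argument applied to the
   negative part [(-1) ⊔ 0], which is disjoint from [1 ⊔ 0 >= 1]. *)

Section SigmaLGuTheory.

Variable G : sigmaLGu.

Declare Scope lg_scope.
Local Notation "0" := (zero G) : lg_scope.
Local Notation "1" := (one G) : lg_scope.
Local Notation "x + y" := (add G x y) : lg_scope.
Local Notation "- x" := (opp G x) : lg_scope.
Local Notation "x <= y" := (le G x y) : lg_scope.
Local Infix "⊔" := (join G) (at level 50, left associativity) : lg_scope.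
Local Infix "⊓" := (meet G) (at level 40, left associativity) : lg_scope.
Local Notation "x *+ n" := (nmul (zero G) (add G) n x)
  (at level 30) : lg_scope.
Local Open Scope lg_scope.

Lemma meetxx (x : G) : x ⊓ x = x.
Proof. rewrite <- (absorb_jm G x x) at 2. apply absorb_mj. Qed.

Lemma le_refl (x : G) : x <= x.
Proof. apply meetxx. Qed.

Lemma le_anti (x y : G) : x <= y -> y <= x -> x = y.
Proof. unfold le; intros Hxy Hyx. rewrite <- Hxy. rewrite <- Hyx at 2. apply meetC. Qed.

Lemma le_trans (x y z : G) : x <= y -> y <= z -> x <= z.
Proof. unfold le; intros Hxy Hyz. rewrite <- Hxy, <- meetA, Hyz. reflexivity. Qed.

Lemma meet_le_l (x y : G) : x ⊓ y <= x.
Proof. unfold le. rewrite (meetC G x y), <- meetA, meetxx. reflexivity. Qed.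

Lemma meet_le_r (x y : G) : x ⊓ y <= y.
Proof. rewrite meetC. apply meet_le_l. Qed.

Lemma le_meet (z x y : G) : z <= x -> z <= y -> z <= x ⊓ y.
Proof. unfold le; intros Hx Hy. rewrite meetA, Hx, Hy. reflexivity. Qed.

Lemma join_r (x z : G) : x <= z -> x ⊔ z = z.
Proof. unfold le; intros H. rewrite <- H, joinC, meetC. apply absorb_jm. Qed.

Lemma join_ge_l (x y : G) : x <= x ⊔ y.
Proof. apply absorb_mj. Qed.

Lemma join_ge_r (x y : G) : y <= x ⊔ y.
Proof. rewrite joinC. apply absorb_mj. Qed.

Lemma join_le (x y z : G) : x <= z -> y <= z -> x ⊔ y <= z.
Proof.
  intros Hx Hy.
  assert (Hz : x ⊔ y ⊔ z = z) by (rewrite <- joinA, (join_r y z Hy); exact (join_r x z Hx)).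
  unfold le. rewrite <- Hz. apply absorb_mj.
Qed.

Lemma meet_le_mono_r (x y z : G) : y <= z -> x ⊓ y <= x ⊓ z.
Proof.
  intros H. apply le_meet; [apply meet_le_l |].
  apply le_trans with y; [apply meet_le_r | exact H].
Qed.

Lemma addr0 (x : G) : x + 0 = x.
Proof. rewrite addC. apply add0. Qed.

Lemma addrN (x : G) : x + - x = 0.
Proof. rewrite addC. apply addN. Qed.

Lemma oppK (x : G) : - - x = x.
Proof. rewrite <- (addr0 (- - x)), <- (addN G x), addA, addN. apply add0. Qed.

Lemma oppr0 : - 0 = 0.
Proof. rewrite <- (addr0 (- 0)). apply addN. Qed.

Lemma add_le_mono_l (a x y : G) : x <= y -> a + x <= a + y.
Proof. unfold le; intros H. rewrite <- add_meet, H. reflexivity. Qed.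

Lemma add_le_mono_r (a x y : G) : x <= y -> x + a <= y + a.
Proof. rewrite (addC G x a), (addC G y a). apply add_le_mono_l. Qed.

Lemma le_addr (x c : G) : 0 <= c -> x <= x + c.
Proof. intros H. rewrite <- (addr0 x) at 1. apply add_le_mono_l. exact H. Qed.

Lemma opp_le_opp (x y : G) : x <= y -> - y <= - x.
Proof.
  intros H. pose proof (add_le_mono_l (- x + - y) x y H) as Hs.
  replace (- x + - y + x) with (- y) in Hs
    by (rewrite (addC G (- x) (- y)), <- addA, addN; symmetry; apply addr0).
  replace (- x + - y + y) with (- x) in Hs by (rewrite <- addA, addN; symmetry; apply addr0).
  exact Hs.
Qed.

Lemma ge0_of_opp_le0 (x : G) : - x <= 0 -> 0 <= x.
Proof. intros H. rewrite <- (oppK x), <- oppr0. apply opp_le_opp. exact H. Qed.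

Lemma opp_join (a b : G) : - (a ⊔ b) = - a ⊓ - b.
Proof.
  apply le_anti.
  - apply le_meet; apply opp_le_opp; [apply join_ge_l | apply join_ge_r].
  - rewrite <- (oppK (- a ⊓ - b)). apply opp_le_opp. apply join_le.
    + rewrite <- (oppK a) at 1. apply opp_le_opp, meet_le_l.
    + rewrite <- (oppK b) at 1. apply opp_le_opp, meet_le_r.
Qed.

Lemma abs_of_ge0 (x : G) : 0 <= x -> x ⊔ - x = x.
Proof.
  intros Hx. rewrite joinC. apply join_r.
  apply le_trans with 0; [| exact Hx].
  rewrite <- oppr0. apply opp_le_opp. exact Hx.
Qed.

Lemma neg_part_meet_pos_part (a : G) : (- a ⊔ 0) ⊓ (a ⊔ 0) = 0.
Proof.
  assert (Hneg : - a ⊔ 0 = (a ⊔ 0) + - a)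
    by (rewrite addC, add_join, addN, addr0; apply joinC).
  rewrite Hneg. rewrite <- (addr0 (a ⊔ 0)) at 2. rewrite <- add_meet.
  replace (- a ⊓ 0) with (- (a ⊔ 0)) by (rewrite opp_join, oppr0; reflexivity).
  apply addrN.
Qed.

Lemma meet_addr_le (x y c : G) :
  0 <= c -> x ⊓ y <= 0 -> x ⊓ (y + c) <= x ⊓ c.
Proof.
  intros Hc Hxy. apply le_meet; [apply meet_le_l |].
  apply le_trans with (x ⊓ y + c).
  - rewrite (addC G (x ⊓ y) c), add_meet, (addC G c x), (addC G c y).
    apply le_meet.
    + apply le_trans with x; [apply meet_le_l | apply le_addr, Hc].
    + apply meet_le_r.
  - rewrite <- (add0 G c) at 2. apply add_le_mono_r. exact Hxy.
Qed.

Lemma meet_nmul_le0 (x c : G) :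
  0 <= c -> x ⊓ c <= 0 -> forall k, x ⊓ c *+ k <= 0.
Proof.
  intros Hc Hxc k. induction k as [|k IH]; simpl.
  - apply meet_le_r.
  - apply le_trans with (x ⊓ c); [apply meet_addr_le |]; assumption.
Qed.

Lemma nmul_le_mono (a c : G) : a <= c -> forall k, a *+ k <= c *+ k.
Proof.
  intros H k. induction k as [|k IH]; simpl; [apply le_refl |].
  apply le_trans with (c *+ k + a).
  - apply add_le_mono_r. exact IH.
  - apply add_le_mono_l. exact H.
Qed.

Lemma abs_le_of_meet_nmul_le (x h : G) :
  (forall n, (x ⊔ - x) ⊓ 1 *+ S n <= h) -> x ⊔ - x <= h.
Proof.
  intros Hn.
  set (f := fun n => (x ⊔ - x) ⊓ 1 *+ S n).
  assert (Hf : f = fun n => f n ⊓ h)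
    by (apply functional_extensionality; intro n; symmetry; apply Hn).
  pose proof (A4 G x) as Hsup. cbv zeta in Hsup. fold f in Hsup.
  pose proof (A3 G (x ⊔ - x) f h) as Hle. rewrite <- Hf, Hsup in Hle.
  exact Hle.
Qed.

Lemma eq0_of_meet_nmul_le0 (x : G) :
  0 <= x -> (forall n, x ⊓ 1 *+ S n <= 0) -> x = 0.
Proof.
  intros Hx Hn. apply le_anti; [| exact Hx].
  rewrite <- (abs_of_ge0 x Hx). apply abs_le_of_meet_nmul_le.
  rewrite (abs_of_ge0 x Hx). exact Hn.
Qed.

Lemma one_ge0 : 0 <= 1.
Proof.
  set (pos := 1 ⊔ 0). set (neg := - (1) ⊔ 0).
  assert (Hpos : 0 <= pos) by apply join_ge_r.
  assert (Hneg : neg = 0).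
  { apply eq0_of_meet_nmul_le0; [apply join_ge_r | intro n].
    apply le_trans with (neg ⊓ pos *+ S n).
    - apply meet_le_mono_r, nmul_le_mono, join_ge_l.
    - apply meet_nmul_le0; [exact Hpos |].
      unfold neg, pos. rewrite neg_part_meet_pos_part. apply le_refl. }
  apply ge0_of_opp_le0. rewrite <- Hneg. apply join_ge_l.
Qed.

End SigmaLGuTheory.

Theorem mainTheorem7 (G : sigmaLGu) :
  le G (zero G) (one G) /\
  (forall f : G, meet G f (one G) = zero G -> f = zero G).
Proof.
  split; [apply one_ge0 |].
  intros f Hf. apply eq0_of_meet_nmul_le0.
  - rewrite <- Hf. apply meet_le_l.
  - intro n. apply meet_nmul_le0; [apply one_ge0 |].
    rewrite Hf. apply le_refl.
Qed.
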